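(* Let $(X,d)$ be a complete $\mathrm{CAT}(0)$-space and $\xi:[0,\ell)\to X$ a self-contracted curve. Then for every $\tau\in[0,\ell)$ and all $t_1,t_2\in(\tau,\ell)$ with $\xi(t_1)\ne\xi(\tau)$ and $\xi(t_2)\ne\xi(\tau)$, we have $\angle[\xi(t_1)\,\xi(\tau)\,\xi(t_2)]<\pi/2$.
   Context: A geodesic metric space $(X,d)$ is a $\mathrm{CAT}(0)$-space if for all $x,y,z\in X$ and every minimal geodesic $\gamma:[0,1]\to X$ from $y$ to $z$ (i.e. $d(\gamma(s),\gamma(t))=|t-s|d(y,z)$), $d^2(x,\gamma(s))\le(1-s)d^2(x,y)+sd^2(x,z)-(1-s)sd^2(y,z)$ for all $s\in[0,1]$; minimal geodesics are then unique, denoted $\gamma_{xy}$. The Euclidean comparison angle $\tilde\angle[yxz]\in[0,\pi]$ is defined by $\cos\tilde\angle[yxz]=\frac{d^2(x,y)+d^2(x,z)-d^2(y,z)}{2d(x,y)d(x,z)}$, and the angle is $\angle[yxz]:=\lim_{s,t\to0}\tilde\angle[\gamma_{xy}(s)\,x\,\gamma_{xz}(t)]$. A map $\xi:[0,\ell)\to X$ (not necessarily continuous) is self-contracted if $d(\xi(t_2),\xi(t_3))\le d(\xi(t_1),\xi(t_3))$ for all $0\le t_1\le t_2\le t_3<\ell$. *)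

From Stdlib Require Import Reals Lra.
Open Scope R_scope.

Definition is_metric {X : Type} (d : X -> X -> R) : Prop :=
  (forall x y, 0 <= d x y) /\
  (forall x y, d x y = 0 <-> x = y) /\
  (forall x y, d x y = d y x) /\
  (forall x y z, d x z <= d x y + d y z).

Definition complete_metric {X : Type} (d : X -> X -> R) : Prop :=
  forall u : nat -> X,
    (forall eps, eps > 0 -> exists N, forall n m, (n >= N)%nat -> (m >= N)%nat ->
        d (u n) (u m) < eps) ->
    exists x, forall eps, eps > 0 -> exists N, forall n, (n >= N)%nat -> d (u n) x < eps.

(* gamma : [0,1] -> X (given on R, only values on [0,1] matter) is a minimal
   geodesic from y to z. *)
Definition min_geodesic {X : Type} (d : X -> X -> R) (gamma : R -> X) (y z : X) : Prop :=
  gamma 0 = y /\ gamma 1 = z /\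
  forall s t, 0 <= s <= 1 -> 0 <= t <= 1 ->
    d (gamma s) (gamma t) = Rabs (t - s) * d y z.

Definition geodesic_space {X : Type} (d : X -> X -> R) : Prop :=
  forall y z, exists gamma, min_geodesic d gamma y z.

Definition CAT0 {X : Type} (d : X -> X -> R) : Prop :=
  is_metric d /\ geodesic_space d /\
  forall x y z gamma, min_geodesic d gamma y z ->
    forall s, 0 <= s <= 1 ->
      (d x (gamma s))^2 <= (1 - s) * (d x y)^2 + s * (d x z)^2
                           - (1 - s) * s * (d y z)^2.

Definition comp_angle {X : Type} (d : X -> X -> R) (y x z : X) : R :=
  acos (((d x y)^2 + (d x z)^2 - (d y z)^2) / (2 * d x y * d x z)).

(* "angle[y x z] = theta": theta is the limit, as s,t -> 0+, of
   ~angle[gamma_xy(s) x gamma_xz(t)], for the minimal geodesics from x to y and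
   from x to z (unique in a CAT(0) space; we quantify over all of them). *)
Definition is_angle {X : Type} (d : X -> X -> R) (y x z : X) (theta : R) : Prop :=
  forall g1 g2, min_geodesic d g1 x y -> min_geodesic d g2 x z ->
    forall eps, eps > 0 -> exists delta, delta > 0 /\
      forall s t, 0 < s < delta -> 0 < t < delta ->
        Rabs (comp_angle d (g1 s) x (g2 t) - theta) < eps.

(* Domain [0, l) with l in (0, +oo]: None encodes l = +oo. *)
Definition below (l : option R) (t : R) : Prop :=
  match l with None => True | Some l => t < l end.

Definition in_dom (l : option R) (t : R) : Prop := 0 <= t /\ below l t.

Definition self_contracted {X : Type} (d : X -> X -> R) (l : option R) (xi : R -> X) : Prop :=
  forall t1 t2 t3, 0 <= t1 -> t1 <= t2 -> t2 <= t3 -> below l t3 ->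
    d (xi t2) (xi t3) <= d (xi t1) (xi t3).

(* In a CAT(0) space the comparison cosine of the triangle formed by the
   geodesics from x towards y and z, cut at parameters s and t, only grows as
   s and t shrink (this is the CAT(0) inequality applied to the sub-geodesic).
   Hence the angle exists and equals acos of the supremum c of these cosines;
   in particular c dominates the comparison cosine of the whole triangle.
   For a self-contracted curve, d(xi t1, xi t2) is at most one of the two
   distances to xi tau, so that comparison cosine is positive, and therefore
   acos c < pi/2. *)
From Stdlib Require Import Reals Lra Psatz Classical.
Open Scope R_scope.

Definition comp_cos {X : Type} (d : X -> X -> R) (y x z : X) : R :=
  ((d x y)^2 + (d x z)^2 - (d y z)^2) / (2 * d x y * d x z).

Lemma comp_angle_acos {X : Type} (d : X -> X -> R) (y x z : X) :
  comp_angle d y x z = acos (comp_cos d y x z).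
Proof. reflexivity. Qed.

Lemma Rdiv_le_l (a b c : R) : 0 < c -> a <= b * c -> a / c <= b.
Proof.
  intros Hc H. apply Rmult_le_reg_r with c; [exact Hc|].
  replace (a / c * c) with a by (field; lra). exact H.
Qed.

Lemma Rle_div_r (a b c : R) : 0 < c -> a * c <= b -> a <= b / c.
Proof.
  intros Hc H. apply Rmult_le_reg_r with c; [exact Hc|].
  replace (b / c * c) with b by (field; lra). exact H.
Qed.

Lemma acos_antitone (u v : R) : -1 <= u -> u <= v -> v <= 1 -> acos v <= acos u.
Proof.
  intros Hu Huv Hv. destruct (Rle_lt_dec (acos v) (acos u)) as [|Hlt]; [assumption|].
  pose proof (acos_bound u). pose proof (acos_bound v).
  pose proof (cos_decreasing_1 (acos u) (acos v) ltac:(lra) ltac:(lra) ltac:(lra) ltac:(lra) Hlt) as Hcos.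
  rewrite !cos_acos in Hcos by lra. lra.
Qed.

Lemma acos_lt_of_cos_lt (phi u : R) : 0 <= phi <= PI -> u <= 1 -> cos phi < u -> acos u < phi.
Proof.
  intros Hphi Hu Hcos. assert (Hm1 : -1 <= u) by (pose proof (COS_bound phi); lra).
  pose proof (acos_bound u).
  destruct (Rlt_le_dec (acos u) phi) as [|Hge]; [assumption|].
  destruct (Rle_lt_or_eq_dec _ _ Hge) as [Hlt|Heq].
  - pose proof (cos_decreasing_1 phi (acos u) ltac:(lra) ltac:(lra) ltac:(lra) ltac:(lra) Hlt) as Hdec.
    rewrite cos_acos in Hdec by lra. lra.
  - rewrite Heq, cos_acos in Hcos by lra. lra.
Qed.

Lemma acos_lt_PI2 (c : R) : 0 < c <= 1 -> acos c < PI / 2.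
Proof.
  intros Hc. pose proof PI_RGT_0.
  apply acos_lt_of_cos_lt; [lra | lra |]. rewrite cos_PI2. lra.
Qed.

Definition image_unit_square (F : R -> R -> R) (r : R) : Prop :=
  exists s t, 0 < s <= 1 /\ 0 < t <= 1 /\ r = F s t.

Definition antitone_unit_square (F : R -> R -> R) : Prop :=
  (forall s s' t, 0 < s' -> s' <= s -> s <= 1 -> 0 < t <= 1 -> F s t <= F s' t) /\
  (forall s t t', 0 < t' -> t' <= t -> t <= 1 -> 0 < s <= 1 -> F s t <= F s t').

Lemma antitone_lub_approach (F : R -> R -> R) (c m : R) :
  antitone_unit_square F ->
  is_lub (image_unit_square F) c -> m < c ->
  exists delta, 0 < delta <= 1 /\ forall s t, 0 < s < delta -> 0 < t < delta -> m < F s t.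
Proof.
  intros [Fs Ft] [_ Hlub] Hm.
  assert (Hex : exists s0 t0, 0 < s0 <= 1 /\ 0 < t0 <= 1 /\ m < F s0 t0).
  { apply NNPP. intro Hno.
    assert (Hub : is_upper_bound (image_unit_square F) m).
    { intros r [s [t [Hs [Ht ->]]]].
      apply Rnot_lt_le. intro Hlt. apply Hno. exists s, t. auto. }
    pose proof (Hlub _ Hub). lra. }
  destruct Hex as [s0 [t0 [Hs0 [Ht0 Hm0]]]].
  exists (Rmin s0 t0). split; [split; [apply Rmin_glb_lt; lra | pose proof (Rmin_l s0 t0); lra]|].
  intros s t Hs Ht. pose proof (Rmin_l s0 t0). pose proof (Rmin_r s0 t0).
  apply Rlt_le_trans with (F s0 t0); [exact Hm0|].
  apply Rle_trans with (F s0 t); [apply Ft | apply Fs]; lra.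
Qed.

Lemma acos_lub_approach (F : R -> R -> R) (c eps : R) :
  antitone_unit_square F ->
  (forall s t, 0 < s <= 1 -> 0 < t <= 1 -> -1 <= F s t <= 1) ->
  is_lub (image_unit_square F) c -> 0 < eps ->
  exists delta, 0 < delta /\ forall s t, 0 < s < delta -> 0 < t < delta ->
    Rabs (acos (F s t) - acos c) < eps.
Proof.
  intros Fmono Fbd [Hub Hlub] Heps.
  assert (Hup : forall s t, 0 < s <= 1 -> 0 < t <= 1 -> F s t <= c).
  { intros s t Hs Ht. apply Hub. exists s, t. auto. }
  assert (Hc : -1 <= c <= 1).
  { split.
    - pose proof (Fbd 1 1 ltac:(lra) ltac:(lra)). pose proof (Hup 1 1 ltac:(lra) ltac:(lra)). lra.
    - apply Hlub. intros r [s [t [Hs [Ht ->]]]]. apply Fbd; auto. }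
  pose proof PI_RGT_0. pose proof (acos_bound c).
  destruct (Rle_lt_or_eq_dec _ _ (proj1 Hc)) as [Hcm1 | <-].
  - assert (HcPI : acos c < PI) by (apply acos_lt_of_cos_lt; [lra | lra | rewrite cos_PI; lra]).
    (* Rather than continuity of acos at c, use an angle phi slightly above
       acos c: every F s t above cos phi has acos (F s t) below phi. *)
    set (phi := Rmin (acos c + eps / 2) PI).
    assert (Hphi : acos c < phi <= PI /\ phi <= acos c + eps / 2).
    { unfold phi. split; [split|]; [apply Rmin_glb_lt; lra | apply Rmin_r | apply Rmin_l]. }
    assert (Hcos_phi : cos phi < c).
    { rewrite <- (cos_acos c) at 1 by lra. apply cos_decreasing_1; lra. }
    destruct (antitone_lub_approach F c (cos phi) Fmono (conj Hub Hlub) Hcos_phi)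
      as [delta [Hdelta Happrox]].
    exists delta. split; [lra|]. intros s t Hs Ht.
    pose proof (Happrox s t Hs Ht) as Hlow.
    pose proof (Fbd s t ltac:(lra) ltac:(lra)). pose proof (Hup s t ltac:(lra) ltac:(lra)).
    pose proof (acos_antitone (F s t) c ltac:(lra) ltac:(lra) ltac:(lra)).
    pose proof (acos_lt_of_cos_lt phi (F s t) ltac:(lra) ltac:(lra) Hlow).
    rewrite Rabs_right; lra.
  - exists 1. split; [lra|]. intros s t Hs Ht.
    replace (F s t) with (-1)
      by (pose proof (Fbd s t ltac:(lra) ltac:(lra)); pose proof (Hup s t ltac:(lra) ltac:(lra)); lra).
    rewrite Rminus_diag, Rabs_R0. exact Heps.
Qed.

Section Metric.

Variables (X : Type) (d : X -> X -> R).

Lemma geodesic_dist_start (g : R -> X) (x y : X) (s : R) :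
  min_geodesic d g x y -> 0 <= s <= 1 -> d x (g s) = s * d x y.
Proof.
  intros [H0 [_ H]] Hs.
  rewrite <- H0 at 1. rewrite H by lra. rewrite Rminus_0_r, Rabs_right by lra. reflexivity.
Qed.

Lemma geodesic_dist_end (g : R -> X) (x y : X) (s : R) :
  min_geodesic d g x y -> 0 <= s <= 1 -> d (g s) y = (1 - s) * d x y.
Proof.
  intros [_ [H1 H]] Hs.
  rewrite <- H1 at 1. rewrite H by lra. rewrite Rabs_right by lra. reflexivity.
Qed.

Lemma geodesic_restrict (g : R -> X) (x y : X) (s : R) :
  min_geodesic d g x y -> 0 < s <= 1 ->
  min_geodesic d (fun u => g (u * s)) x (g s).
Proof.
  intros Hg Hs. pose proof (geodesic_dist_start g x y s Hg ltac:(lra)) as Hd.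
  destruct Hg as [H0 [_ H]]. split; [|split].
  - rewrite Rmult_0_l. exact H0.
  - rewrite Rmult_1_l. reflexivity.
  - intros u v Hu Hv. rewrite H by (split; nra).
    rewrite Hd. replace (v * s - u * s) with ((v - u) * s) by ring.
    rewrite Rabs_mult, (Rabs_right s) by lra. ring.
Qed.

Hypothesis Hmetric : is_metric d.

Lemma dist_pos_of_neq (x y : X) : y <> x -> 0 < d x y.
Proof.
  intros Hneq. destruct Hmetric as [Hpos [Heq _]].
  destruct (Hpos x y) as [|H]; [assumption|].
  exfalso. apply Hneq. symmetry. apply Heq. auto.
Qed.

Lemma comp_cos_sym (y x z : X) : comp_cos d y x z = comp_cos d z x y.
Proof.
  destruct Hmetric as [_ [_ [Hsym _]]]. unfold comp_cos.
  rewrite (Hsym y z). f_equal; ring.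
Qed.

Lemma comp_cos_bound (y x z : X) : 0 < d x y -> 0 < d x z -> -1 <= comp_cos d y x z <= 1.
Proof.
  intros Ha Hb. destruct Hmetric as [Hpos [_ [Hsym Htri]]].
  assert (Hden : 0 < 2 * d x y * d x z) by (repeat apply Rmult_lt_0_compat; lra).
  pose proof (Htri x y z). pose proof (Htri x z y). pose proof (Htri y x z). pose proof (Hpos y z).
  rewrite (Hsym z y), (Hsym y x) in *. unfold comp_cos. split.
  - apply Rle_div_r; [exact Hden | nra].
  - apply Rdiv_le_l; [exact Hden | nra].
Qed.

Lemma comp_cos_pos (y x z : X) :
  0 < d x y -> 0 < d x z -> d y z <= d x y \/ d y z <= d x z -> 0 < comp_cos d y x z.
Proof.
  intros Ha Hb Hside. destruct Hmetric as [Hpos _]. pose proof (Hpos y z).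
  apply Rdiv_lt_0_compat; [|repeat apply Rmult_lt_0_compat; lra].
  destruct Hside; nra.
Qed.

Lemma self_contracted_side (l : option R) (xi : R -> X) (tau t1 t2 : R) :
  self_contracted d l xi -> 0 <= tau -> tau <= t1 -> below l t1 -> tau <= t2 -> below l t2 ->
  d (xi t1) (xi t2) <= d (xi tau) (xi t1) \/ d (xi t1) (xi t2) <= d (xi tau) (xi t2).
Proof.
  intros Hsc Htau Ht1 Hb1 Ht2 Hb2. destruct (Rle_lt_dec t1 t2) as [Hle|Hlt].
  - right. exact (Hsc tau t1 t2 Htau Ht1 Hle Hb2).
  - left. destruct Hmetric as [_ [_ [Hsym _]]]. rewrite Hsym.
    exact (Hsc tau t2 t1 Htau Ht2 (Rlt_le _ _ Hlt) Hb1).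
Qed.

End Metric.

Section CAT0.

Variables (X : Type) (d : X -> X -> R).
Hypothesis Hcat : CAT0 d.

Lemma geodesic_unique (g h : R -> X) (x y : X) (s : R) :
  min_geodesic d g x y -> min_geodesic d h x y -> 0 <= s <= 1 -> g s = h s.
Proof.
  intros Hg Hh Hs. destruct Hcat as [[Hpos [Heq [Hsym _]]] [_ Hineq]].
  pose proof (Hineq (g s) x y h Hh s Hs) as H.
  rewrite (geodesic_dist_end X d g x y s Hg Hs), (Hsym (g s) x),
    (geodesic_dist_start X d g x y s Hg Hs) in H.
  apply Heq. pose proof (Hpos (g s) (h s)). nra.
Qed.

(* Angle monotonicity: apply the CAT(0) inequality, with base point P, to the
   geodesic from x to g s at parameter s'/s. *)
Lemma comp_cos_geodesic_antitone (g : R -> X) (x y P : X) (s s' : R) :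
  min_geodesic d g x y -> 0 < d x y -> 0 < d x P -> 0 < s' -> s' <= s -> s <= 1 ->
  comp_cos d (g s) x P <= comp_cos d (g s') x P.
Proof.
  intros Hg Ha HB Hs' Hss Hs1.
  assert (Hratio : 0 <= s' / s <= 1).
  { split; [apply Rlt_le, Rdiv_lt_0_compat; lra | apply Rdiv_le_l; lra]. }
  pose proof Hcat as [[_ [_ [Hsym _]]] [_ Hineq]].
  pose proof (Hineq P x (g s) _ (geodesic_restrict X d g x y s Hg ltac:(lra)) _ Hratio) as H.
  simpl in H. replace (s' / s * s) with s' in H by (field; lra).
  unfold comp_cos.
  rewrite (geodesic_dist_start X d g x y s Hg ltac:(lra)) in *.
  rewrite (geodesic_dist_start X d g x y s' Hg ltac:(lra)).
  rewrite (Hsym P x), (Hsym P (g s)), (Hsym P (g s')) in H.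
  set (a := d x y) in *. set (B := d x P) in *.
  set (D := d (g s) P) in *. set (D' := d (g s') P) in *.
  assert (Hcleared : s * D'^2 <= (s - s') * B^2 + s' * D^2 - (s - s') * s' * s * a^2).
  { apply Rle_trans with (s * ((1 - s'/s) * B^2 + s'/s * D^2 - (1 - s'/s) * (s'/s) * (s * a)^2)).
    - apply Rmult_le_compat_l; lra.
    - right. field. lra. }
  assert (Hnum : s' * ((s * a)^2 + B^2 - D^2) <= s * ((s' * a)^2 + B^2 - D'^2)) by nra.
  replace (((s * a)^2 + B^2 - D^2) / (2 * (s * a) * B))
    with ((s' * ((s * a)^2 + B^2 - D^2)) * / (2 * s * s' * a * B)) by (field; lra).
  replace (((s' * a)^2 + B^2 - D'^2) / (2 * (s' * a) * B))
    with ((s * ((s' * a)^2 + B^2 - D'^2)) * / (2 * s * s' * a * B)) by (field; lra).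
  apply Rmult_le_compat_r; [|exact Hnum].
  apply Rlt_le, Rinv_0_lt_compat. repeat apply Rmult_lt_0_compat; lra.
Qed.

Lemma cat0_angle_exists (x y z : X) :
  0 < d x y -> 0 < d x z ->
  exists c, is_angle d y x z (acos c) /\ comp_cos d y x z <= c <= 1.
Proof.
  intros Ha Hb. pose proof Hcat as [Hmetric [Hgeo _]].
  destruct (Hgeo x y) as [g1 Hg1]. destruct (Hgeo x z) as [g2 Hg2].
  set (F := fun s t => comp_cos d (g1 s) x (g2 t)).
  assert (Hpos1 : forall s, 0 < s <= 1 -> 0 < d x (g1 s)).
  { intros s Hs. rewrite (geodesic_dist_start X d g1 x y s Hg1) by lra. nra. }
  assert (Hpos2 : forall t, 0 < t <= 1 -> 0 < d x (g2 t)).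
  { intros t Ht. rewrite (geodesic_dist_start X d g2 x z t Hg2) by lra. nra. }
  assert (Fmono : antitone_unit_square F).
  { split.
    - intros s s' t **. apply comp_cos_geodesic_antitone with y; auto.
    - intros s t t' **. unfold F. rewrite !(comp_cos_sym X d Hmetric (g1 s)).
      apply comp_cos_geodesic_antitone with z; auto. }
  assert (Fbd : forall s t, 0 < s <= 1 -> 0 < t <= 1 -> -1 <= F s t <= 1).
  { intros s t Hs Ht. apply comp_cos_bound; auto. }
  assert (F11 : F 1 1 = comp_cos d y x z).
  { destruct Hg1 as [_ [E1 _]]. destruct Hg2 as [_ [E2 _]]. unfold F. now rewrite E1, E2. }
  destruct (completeness (image_unit_square F)) as [c Hc].
  { exists 1. intros r [s [t [Hs [Ht ->]]]]. apply Fbd; auto. }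
  { exists (F 1 1), 1, 1. repeat split; lra. }
  exists c. split.
  - intros h1 h2 Hh1 Hh2 eps Heps.
    destruct (acos_lub_approach F c eps Fmono Fbd Hc Heps) as [delta [Hdelta Happrox]].
    exists (Rmin delta 1). split; [apply Rmin_glb_lt; lra|].
    intros s t Hs Ht. pose proof (Rmin_l delta 1). pose proof (Rmin_r delta 1).
    rewrite <- (geodesic_unique g1 h1 x y s), <- (geodesic_unique g2 h2 x z t) by (auto; lra).
    rewrite comp_angle_acos. apply Happrox; lra.
  - split.
    + rewrite <- F11. apply (proj1 Hc). exists 1, 1. repeat split; lra.
    + apply (proj2 Hc). intros r [s [t [Hs [Ht ->]]]]. apply Fbd; auto.
Qed.

End CAT0.

Theorem mainTheorem13 (X : Type) (d : X -> X -> R) (l : option R) (xi : R -> X) :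
  CAT0 d -> complete_metric d ->
  self_contracted d l xi ->
  forall tau t1 t2, in_dom l tau ->
    tau < t1 -> below l t1 -> tau < t2 -> below l t2 ->
    xi t1 <> xi tau -> xi t2 <> xi tau ->
    exists theta, is_angle d (xi t1) (xi tau) (xi t2) theta /\ theta < PI / 2.
Proof.
  intros Hcat _ Hsc tau t1 t2 [Htau0 _] Ht1 Hb1 Ht2 Hb2 Hn1 Hn2.
  pose proof Hcat as [Hmetric _].
  pose proof (dist_pos_of_neq X d Hmetric _ _ Hn1) as Ha.
  pose proof (dist_pos_of_neq X d Hmetric _ _ Hn2) as Hb.
  assert (Hacute : 0 < comp_cos d (xi t1) (xi tau) (xi t2)).
  { apply comp_cos_pos; auto.
    apply (self_contracted_side X d Hmetric l); auto; lra. }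
  destruct (cat0_angle_exists X d Hcat _ _ _ Ha Hb) as [c [Hangle Hc]].
  exists (acos c). split; [exact Hangle | apply acos_lt_PI2; lra].
Qed.
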